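(* Let $W\in[0,1]^{k\times k}$ and consider the collaborative learning problem with strategy space $\mathbb{R}_+^k$, linear utilities $u_i({\boldsymbol\theta})=\sum_jW_{ij}\theta_j$ and thresholds $\mu_i$. If $W_{ij}<W_{ii}$ for all $i\ne j$, then every stable equilibrium is envy-free.
   Context: ${\boldsymbol\theta}$ is feasible if $u_i({\boldsymbol\theta})\ge\mu_i$ for all $i$. A feasible ${\boldsymbol\theta}$ is a stable equilibrium if for no $i$ is there $0\le\theta_i'<\theta_i$ with $u_i(\theta_i',{\boldsymbol\theta}_{-i})\ge\mu_i$ (${\boldsymbol\theta}$ with $i$-th entry replaced). A feasible ${\boldsymbol\theta}$ is envy-free if there are no $i,j$ with $\theta_j<\theta_i$ and $u_i({\boldsymbol\theta}^{(i,j)})\ge\mu_i$, where ${\boldsymbol\theta}^{(i,j)}$ is ${\boldsymbol\theta}$ with entries $i$ and $j$ swapped. *)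

From mathcomp Require Import all_boot all_order all_algebra.
Set Implicit Arguments. Unset Strict Implicit. Unset Printing Implicit Defensive.
Import Order.TTheory GRing.Theory Num.Theory.
Local Open Scope ring_scope.

Section Collab.
Variables (R : realFieldType) (k : nat).

Definition nonneg_profile (theta : 'I_k -> R) : Prop := forall i, 0 <= theta i.

Definition lin_util (W : 'M[R]_k) (i : 'I_k) (theta : 'I_k -> R) : R :=
  \sum_(j < k) W i j * theta j.

Definition replace (theta : 'I_k -> R) (i : 'I_k) (t : R) : 'I_k -> R :=
  fun l => if l == i then t else theta l.

Definition swap (theta : 'I_k -> R) (i j : 'I_k) : 'I_k -> R :=
  fun l => if l == i then theta j else if l == j then theta i else theta l.

Definition feasible (W : 'M[R]_k) (mu : 'I_k -> R) (theta : 'I_k -> R) : Prop :=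
  nonneg_profile theta /\ forall i, mu i <= lin_util W i theta.

Definition stable_equilibrium (W : 'M[R]_k) (mu : 'I_k -> R) (theta : 'I_k -> R) : Prop :=
  feasible W mu theta /\
  ~ (exists i (t : R), 0 <= t /\ t < theta i /\ mu i <= lin_util W i (replace theta i t)).

Definition envy_free (W : 'M[R]_k) (mu : 'I_k -> R) (theta : 'I_k -> R) : Prop :=
  feasible W mu theta /\
  ~ (exists i j, theta j < theta i /\ mu i <= lin_util W i (swap theta i j)).

End Collab.

From mathcomp Require Import all_boot all_order all_algebra.
From mathcomp Require Import ring.
Import Order.TTheory GRing.Theory Num.Theory.
Local Open Scope ring_scope.

(* If agent i envies j, i.e. theta j < theta i and i still meets its threshold
   after swapping, then i can instead keep its own slot and lower theta i to
   theta j + W i j / W i i * (theta i - theta j): with linear utilities this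
   yields exactly the utility of the swapped profile, and since
   0 <= W i j < W i i the new contribution lies in [theta j, theta i).  So i
   has a profitable deviation and theta is not stable. *)

Section LinearUtility.
Variables (R : realFieldType) (k : nat) (W : 'M[R]_k).

Lemma lin_util_replace i theta t :
  lin_util W i (replace theta i t) = lin_util W i theta + W i i * (t - theta i).
Proof.
rewrite /lin_util (bigD1 i) //= [in RHS](bigD1 i) //= /replace eqxx.
rewrite (eq_bigr (fun j => W i j * theta j)); last by move=> j /negbTE ->.
ring.
Qed.

Lemma lin_util_swap i j theta : i != j ->
  lin_util W i (swap theta i j) =
  lin_util W i theta + (W i j - W i i) * (theta i - theta j).
Proof.
move=> neq_ij; have neq_ji : j != i by rewrite eq_sym.
rewrite /lin_util (bigD1 i) //= [in RHS](bigD1 i) //=.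
rewrite (bigD1 j) //= [in RHS](bigD1 j) //= /swap eqxx (negbTE neq_ji) eqxx.
rewrite (eq_bigr (fun l => W i l * theta l)); last first.
  by move=> l /andP[/negbTE -> /negbTE ->].
ring.
Qed.

Lemma lin_util_replace_swap i j theta : i != j -> W i i != 0 ->
  lin_util W i (replace theta i (theta j + W i j / W i i * (theta i - theta j)))
  = lin_util W i (swap theta i j).
Proof.
move=> neq_ij Wii_neq0; rewrite lin_util_replace lin_util_swap //.
by congr (_ + _); field.
Qed.

End LinearUtility.

Lemma stable_no_envy {R : realFieldType} {k : nat} {W : 'M[R]_k} {mu theta i j} :
  stable_equilibrium W mu theta -> 0 <= W i j < W i i -> theta j < theta i ->
  lin_util W i (swap theta i j) < mu i.
Proof.
move=> [[theta_ge0 _] no_deviation] /andP[Wij_ge0 Wij_lt_Wii] lt_ji.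
have neq_ij : i != j by apply/eqP => eq_ij; move: lt_ji; rewrite eq_ij ltxx.
have Wii_gt0 : 0 < W i i := le_lt_trans Wij_ge0 Wij_lt_Wii.
have gap_gt0 : 0 < theta i - theta j by rewrite subr_gt0.
rewrite ltNge; apply/negP => envy; apply: no_deviation.
exists i, (theta j + W i j / W i i * (theta i - theta j)); split; [|split].
- by rewrite addr_ge0 // mulr_ge0 ?divr_ge0 // ltW.
- by rewrite -ltrBrDl gtr_pMl // ltr_pdivrMr // mul1r.
- by rewrite lin_util_replace_swap // gt_eqF.
Qed.

Theorem theorem7 (R : realFieldType) (k : nat) (W : 'M[R]_k) (mu : 'I_k -> R) :
  (forall i j, 0 <= W i j <= 1) ->
  (forall i j, i != j -> W i j < W i i) ->
  forall theta : 'I_k -> R,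
    stable_equilibrium W mu theta -> envy_free W mu theta.
Proof.
move=> W_01 W_diag_max theta stable; split; first by case: stable.
move=> [i [j [lt_ji envy]]].
have neq_ij : i != j by apply/eqP => eq_ij; move: lt_ji; rewrite eq_ij ltxx.
have /andP[Wij_ge0 _] := W_01 i j.
have Wij_bounds : 0 <= W i j < W i i by rewrite Wij_ge0 W_diag_max.
by move: (stable_no_envy stable Wij_bounds lt_ji); rewrite ltNge envy.
Qed.
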